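(* Let $k>0$, $\sigma>0$, $\eta>0$ and $\beta\in(0,1)$ be real numbers, and let \[ A:=\begin{pmatrix} 1+\sigma\eta& 0& 0\\ -k& 1& 0\\ 0& -1& 1\end{pmatrix}^{-1}\begin{pmatrix} \sigma\eta& \eta& 1\\ 0& \beta& 0\\ 0& 0& 1\end{pmatrix}. \] Then: (i) One has \[ A=\begin{pmatrix} \frac{\sigma\eta}{1+\sigma\eta}& \frac{\eta}{1+\sigma\eta} & \frac{1}{1+\sigma\eta}\\ \frac{k\sigma\eta}{1+\sigma\eta}& \frac{k\eta}{1+\sigma\eta}+\beta& \frac{k}{1+\sigma\eta}\\ \frac{k\sigma\eta}{1+\sigma\eta}& \frac{k\eta}{1+\sigma\eta}+\beta& \frac{k}{1+\sigma\eta}+1\end{pmatrix}. \] (ii) The eigenvalues of $A$ are exactly the roots of $P(x)=x^3-bx^2+cx-d$, where \[ b=\frac{\sigma\eta+k(1+\eta)}{1+\sigma\eta}+1+\beta,\quad c=(1+\beta)\frac{\sigma\eta}{1+\sigma\eta}+\frac{k\eta}{1+\sigma\eta}+\beta,\quad d=\frac{\beta\sigma\eta}{1+\sigma\eta}. \] (iii) The model is unconditionally determined: for every $(k,\sigma,\eta,\beta)$ with $k>0$, $\sigma>0$, $\eta>0$, $0<\beta<1$, the matrix $A$ has two eigenvalues inside the unit disk and the remaining one outside the unit disk.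
   Context: The unit disk means the open set $\{z\in\mathbb{C}:\ |z|<1\}$. The parameter space is $S=\{(k,\sigma,\eta,\beta)\in\mathbb{R}^4:\ k>0,\sigma>0,\eta>0,0<\beta<1\}$; ''unconditionally determined'' means the determinacy property (two eigenvalues of $A$ inside the unit disk, one outside) holds for every point of $S$. *)

(* real closed field R (covers the reals), complex R = R[i]. *)
From HB Require Import structures.
From mathcomp Require Import all_boot all_order all_algebra.
From mathcomp Require Import complex.
Set Implicit Arguments. Unset Strict Implicit. Unset Printing Implicit Defensive.
Import Order.TTheory GRing.Theory Num.Theory.
Local Open Scope ring_scope.

Definition mx3 (R : rcfType) (L : seq (seq R)) : 'M[R]_3 :=
  \matrix_(i < 3, j < 3) nth 0 (nth [::] L i) j.

Section Model.
Variable R : rcfType.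
Variables (k sigma eta beta : R).

Definition Mleft : 'M[R]_3 :=
  mx3
    [:: [:: 1 + sigma * eta; 0; 0];
        [:: - k; 1; 0];
        [:: 0; -1; 1]].

Definition Mright : 'M[R]_3 :=
  mx3
    [:: [:: sigma * eta; eta; 1];
        [:: 0; beta; 0];
        [:: 0; 0; 1]].

Definition Amat : 'M[R]_3 := invmx Mleft *m Mright.

Definition Aexplicit : 'M[R]_3 :=
  let s := 1 + sigma * eta in
  mx3
    [:: [:: sigma * eta / s; eta / s; 1 / s];
        [:: k * sigma * eta / s; k * eta / s + beta; k / s];
        [:: k * sigma * eta / s; k * eta / s + beta; k / s + 1]].

Definition bcoef : R := (sigma * eta + k * (1 + eta)) / (1 + sigma * eta) + 1 + beta.
Definition ccoef : R :=
  (1 + beta) * (sigma * eta / (1 + sigma * eta)) + k * eta / (1 + sigma * eta) + beta.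
Definition dcoef : R := beta * sigma * eta / (1 + sigma * eta).

Definition Ppoly : {poly R} :=
  'X^3 - bcoef *: 'X^2 + ccoef *: 'X - dcoef%:P.

(* A viewed as a complex matrix (eigenvalues may be complex) *)
Definition AmatC : 'M[R[i]]_3 := map_mx (real_complex R) Amat.
End Model.

From mathcomp Require Import all_boot all_order all_algebra.
From mathcomp Require Import complex polyrcf ring lra.
Set Implicit Arguments. Unset Strict Implicit. Unset Printing Implicit Defensive.
Import Order.TTheory GRing.Theory Num.Theory.
Local Open Scope ring_scope.

(* For (iii),
   P(1) = -k/(1 + sigma eta) < 0 and P is monic, so P has a real root r > 1.
   Dividing it out, P = (x - r)(x^2 + p x + q) with q = d/r in (0, 1), and the
   signs of P(1) = (1 - r)(1 + p + q) and P(-1) = -(1 + r)(1 - p + q) give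
   1 + p + q > 0 and 1 - p + q > 0: the Jury conditions, which put both roots
   of the quadratic factor in the open unit disk. *)

Definition matrix3 (R : comNzRingType) (a b c d e f g h i : R) : 'M[R]_3 :=
  \matrix_(r < 3, s < 3) nth 0 (nth [::] [:: [:: a; b; c]; [:: d; e; f]; [:: g; h; i]] r) s.

Lemma det_matrix3 (R : comNzRingType) (a b c d e f g h i : R) :
  \det (matrix3 a b c d e f g h i) =
  a * (e * i - f * h) - b * (d * i - f * g) + c * (d * h - e * g).
Proof.
rewrite (expand_det_row _ ord0) !big_ord_recr big_ord0 /=.
rewrite /cofactor !(expand_det_row _ ord0) !big_ord_recr big_ord0 /=.
rewrite /cofactor !det_mx11 !mxE /= !big_ord0 /= !expr0 !expr1 ?expr2.
ring.
Qed.

Lemma char_poly_matrix3 (R : comNzRingType) (a b c d e f g h i : R) :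
  char_poly (matrix3 a b c d e f g h i) =
  'X^3 - (a + e + i)%:P * 'X^2
  + (a * e - b * d + a * i - c * g + e * i - f * h)%:P * 'X
  - (\det (matrix3 a b c d e f g h i))%:P.
Proof.
rewrite /char_poly.
have -> : char_poly_mx (matrix3 a b c d e f g h i) =
    matrix3 ('X - a%:P) (- b%:P) (- c%:P) (- d%:P) ('X - e%:P) (- f%:P)
            (- g%:P) (- h%:P) ('X - i%:P).
  apply/matrixP => p q; rewrite !mxE.
  by case: p => [[|[|[|p]]] Hp] //; case: q => [[|[|[|q]]] Hq] //=;
     rewrite ?mulr1n ?mulr0n ?sub0r.
rewrite !det_matrix3 !(polyCB, polyCM, polyCD, polyCN).
ring.
Qed.

Lemma exists_roots_quadratic (C : numClosedFieldType) (p q : C) :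
  exists z1 z2 : C, p = - (z1 + z2) /\ q = z1 * z2.
Proof.
pose z1 := (- p + sqrtC (p ^+ 2 - 4 * q)) / 2.
exists z1, (- p - z1); split; first ring.
have z1_root : z1 ^+ 2 + p * z1 + q = 0.
  have -> : z1 ^+ 2 + p * z1 + q = (sqrtC (p ^+ 2 - 4 * q) ^+ 2 - (p ^+ 2 - 4 * q)) / 4.
    by rewrite /z1; field.
  by rewrite sqrtCK subrr mul0r.
by rewrite -[LHS]subr0 -z1_root; ring.
Qed.

Section RealClosed.
Variable R : rcfType.
Local Open Scope complex_scope.

Lemma normc_lt1 (a b : R) : a ^+ 2 + b ^+ 2 < 1 -> `|a +i* b| < 1.
Proof. by move=> h; rewrite normc_def ltcE /= eqxx /= -sqrtr1 ltr_sqrt. Qed.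

Lemma normc_real_gt1 (r : R) : 1 < r -> 1 < `|r%:C|.
Proof.
move=> r1; rewrite normc_def ltcE /= eqxx /= expr0n /= addr0 sqrtr_sqr.
by rewrite ger0_norm //; lra.
Qed.

Lemma real_quadratic_root_norm_lt1 (p q a : R) :
  -1 < q -> q < 1 -> 0 < 1 + p + q -> 0 < 1 - p + q ->
  a ^+ 2 + p * a + q = 0 -> `|a| < 1.
Proof. by move=> *; rewrite ltr_norml; apply/andP; split; nra. Qed.

Lemma quadratic_root_norm_lt1 (p q : R) (z : R[i]) :
  -1 < q -> q < 1 -> 0 < 1 + p + q -> 0 < 1 - p + q ->
  z ^+ 2 + p%:C * z + q%:C = 0 -> `|z| < 1.
Proof.
move=> qN1 q1 Jp Jm; case: z => a b.
move/eqP; rewrite eq_complex /= => /andP [/eqP re /eqP im].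
apply: normc_lt1.
have [b0|b_neq0] := eqVneq b 0.
  have : `|a| < 1.
    by apply: (real_quadratic_root_norm_lt1 qN1 q1 Jp Jm); rewrite -re b0; ring.
  by rewrite ltr_norml b0 => /andP [? ?]; nra.
(* A non-real root: the imaginary part of the equation forces a = -p/2, and
   then its real part reads a^2 + b^2 = q. *)
have a_eq : 2 * a + p = 0.
  by apply: (mulIf b_neq0); rewrite mul0r -im; ring.
nra.
Qed.

Lemma root_gt_of_lead_coef_gt0 (P : {poly R}) (a : R) :
  0 < lead_coef P -> P.[a] < 0 -> exists2 r, a < r & root P r.
Proof.
move=> lc_gt0 Pa_lt0; have [n Pn_ge] := poly_pinfty_gt_lc lc_gt0.
have [r /andP [ar _] rootPr] : exists2 r, a <= r <= Num.max a n & root P r.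
  apply: poly_ivt; first by rewrite le_max lexx.
  by rewrite (ltW Pa_lt0) /= (le_trans (ltW lc_gt0)) // Pn_ge // le_max lexx orbT.
exists r => //; rewrite lt_neqAle ar andbT.
by apply: contraTneq rootPr => <-; rewrite /root lt_eqF.
Qed.

Definition cubic (b c d : R) : {poly R} := 'X^3 - b *: 'X^2 + c *: 'X - d%:P.

Lemma horner_cubic (b c d x : R) :
  (cubic b c d).[x] = x ^+ 3 - b * x ^+ 2 + c * x - d.
Proof. by rewrite /cubic !hornerE. Qed.

Lemma lead_coef_cubic (b c d : R) : lead_coef (cubic b c d) = 1.
Proof.
rewrite /cubic -!addrA lead_coefDl ?lead_coefXn // size_polyXn ltnS.
apply/leq_sizeP => j j_ge3; rewrite !coefE.
by case: j j_ge3 => [|[|[|j]]] //= _; rewrite !mulr0 subrr oppr0 add0r.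
Qed.

Lemma cubic_factor (b c d r : R) : r != 0 -> root (cubic b c d) r ->
  cubic b c d = ('X - r%:P) * ('X^2 + (r - b) *: 'X + (d / r)%:P).
Proof.
move=> r_neq0 /rootP; rewrite horner_cubic => root_r.
pose q := d / r.
have d_eq : d = r * q by rewrite /q; field.
have c_eq : c = q - r * (r - b).
  by apply: (mulIf r_neq0); rewrite -[c * r]subr0 -root_r d_eq; ring.
rewrite /cubic -/q c_eq d_eq; clearbody q.
by rewrite -!mul_polyC !(polyCB, polyCM); ring.
Qed.

Lemma cubic_unit_disk_split (b c d : R) :
  (cubic b c d).[1] < 0 -> (cubic b c d).[-1] < 0 -> 0 < d -> d < 1 ->
  exists z1 z2 z3 : R[i],
    map_poly (real_complex R) (cubic b c d)
      = ('X - z1%:P) * ('X - z2%:P) * ('X - z3%:P) /\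
    `|z1| < 1 /\ `|z2| < 1 /\ 1 < `|z3|.
Proof.
move=> P1 PN1 d_gt0 d_lt1.
have lc_gt0 : 0 < lead_coef (cubic b c d) by rewrite lead_coef_cubic.
have [r r_gt1 root_r] := root_gt_of_lead_coef_gt0 lc_gt0 P1.
have r_gt0 : 0 < r by lra.
have := cubic_factor (lt0r_neq0 r_gt0) root_r.
set p := r - b; set q := d / r => P_eq.
have q_gt0 : 0 < q by rewrite divr_gt0.
have q_lt1 : q < 1 by rewrite ltr_pdivrMr // mul1r; lra.
clearbody p q.
have Jp : 0 < 1 + p + q.
  have : (cubic b c d).[1] = (1 - r) * (1 + p + q) by rewrite P_eq !hornerE; ring.
  by nra.
have Jm : 0 < 1 - p + q.
  have : (cubic b c d).[-1] = (-1 - r) * (1 - p + q) by rewrite P_eq !hornerE; ring.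
  by nra.
have [z1 [z2 [p_eq q_eq]]] := exists_roots_quadratic p%:C q%:C.
exists z1, z2, r%:C; split.
  rewrite P_eq !(rmorphM, rmorphB, rmorphD) /= map_polyZ !map_polyX !map_polyC /=.
  by rewrite -!mul_polyC p_eq q_eq !(polyCN, polyCD, polyCM); ring.
have qN1 : -1 < q by lra.
split; [|split]; last exact: normc_real_gt1.
- by apply: (quadratic_root_norm_lt1 qN1 q_lt1 Jp Jm); rewrite p_eq q_eq; ring.
- by apply: (quadratic_root_norm_lt1 qN1 q_lt1 Jp Jm); rewrite p_eq q_eq; ring.
Qed.

End RealClosed.

Lemma mx3E (R : rcfType) (a b c d e f g h i : R) :
  mx3 [:: [:: a; b; c]; [:: d; e; f]; [:: g; h; i]] = matrix3 a b c d e f g h i.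
Proof. by []. Qed.

Section Model.
Variables (R : rcfType) (k sigma eta beta : R).
Hypothesis s_neq0 : 1 + sigma * eta != 0.

Lemma Mleft_unit : Mleft k sigma eta \in unitmx.
Proof.
rewrite unitmxE unitfE /Mleft mx3E det_matrix3.
by rewrite !(mul0r, mulr0, mulr1, subr0, add0r, addr0).
Qed.

Lemma Amat_explicit : Amat k sigma eta beta = Aexplicit k sigma eta beta.
Proof.
rewrite /Amat; suff -> : Mright sigma eta beta = Mleft k sigma eta *m Aexplicit k sigma eta beta.
  by rewrite mulKmx // Mleft_unit.
apply/matrixP => p q; rewrite !mxE !big_ord_recr big_ord0 /= !mxE.
by case: p => [[|[|[|p]]] Hp] //; case: q => [[|[|[|q]]] Hq] //=; field.
Qed.

Lemma char_poly_Amat : char_poly (Amat k sigma eta beta) = Ppoly k sigma eta beta.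
Proof.
rewrite Amat_explicit /Aexplicit mx3E char_poly_matrix3 det_matrix3.
rewrite /Ppoly -!mul_polyC; congr (_ - _ * _ + _ * _ - _); congr (_ %:P).
all: by rewrite /bcoef /ccoef /dcoef; field.
Qed.

Lemma char_poly_AmatC :
  char_poly (AmatC k sigma eta beta) = map_poly (real_complex R) (Ppoly k sigma eta beta).
Proof. by rewrite /AmatC -map_char_poly char_poly_Amat. Qed.

Lemma eigenvalue_AmatC (z : R[i]) :
  eigenvalue (AmatC k sigma eta beta) z <->
  root (map_poly (real_complex R) (Ppoly k sigma eta beta)) z.
Proof. by rewrite eigenvalue_root_char char_poly_AmatC. Qed.

End Model.

Lemma Ppoly_unit_disk_split (R : rcfType) (k sigma eta beta : R) :
  0 < k -> 0 < sigma -> 0 < eta -> 0 < beta -> beta < 1 ->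
  exists z1 z2 z3 : R[i],
    map_poly (real_complex R) (Ppoly k sigma eta beta)
      = ('X - z1%:P) * ('X - z2%:P) * ('X - z3%:P) /\
    `|z1| < 1 /\ `|z2| < 1 /\ 1 < `|z3|.
Proof.
move=> k_gt0 sigma_gt0 eta_gt0 beta_gt0 beta_lt1.
have se_gt0 : 0 < sigma * eta by rewrite mulr_gt0.
have s_gt0 : 0 < 1 + sigma * eta by lra.
set u := sigma * eta / (1 + sigma * eta).
set v := k * eta / (1 + sigma * eta).
set w := k / (1 + sigma * eta).
have u_gt0 : 0 < u by rewrite divr_gt0.
have u_lt1 : u < 1 by rewrite ltr_pdivrMr // mul1r; lra.
have v_gt0 : 0 < v by rewrite divr_gt0 ?mulr_gt0.
have w_gt0 : 0 < w by rewrite divr_gt0.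
have bE : bcoef k sigma eta beta = u + v + w + 1 + beta.
  by rewrite /bcoef /u /v /w; field; rewrite lt0r_neq0.
have dE : dcoef sigma eta beta = beta * u by rewrite /dcoef /u !mulrA.
apply: cubic_unit_disk_split; rewrite ?horner_cubic ?bE dE /ccoef -/u -/v.
all: nra.
Qed.

Theorem theorem4p2 (R : rcfType) (k sigma eta beta : R) :
  0 < k -> 0 < sigma -> 0 < eta -> 0 < beta -> beta < 1 ->
  (* (i) explicit form of A *)
  Amat k sigma eta beta = Aexplicit k sigma eta beta /\
  (* (ii) the (complex) eigenvalues of A are exactly the roots of P *)
  (forall z : R[i],
      eigenvalue (AmatC k sigma eta beta) z <->
      root (map_poly (real_complex R) (Ppoly k sigma eta beta)) z) /\
  (* (iii) counted with multiplicity: two eigenvalues in the open unit disk,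
     one outside the closed unit disk *)
  (exists z1 z2 z3 : R[i],
      char_poly (AmatC k sigma eta beta) = ('X - z1%:P) * ('X - z2%:P) * ('X - z3%:P) /\
      `|z1| < 1 /\ `|z2| < 1 /\ 1 < `|z3|).
Proof.
move=> k_gt0 sigma_gt0 eta_gt0 beta_gt0 beta_lt1.
have s_neq0 : 1 + sigma * eta != 0.
  by apply: lt0r_neq0; have := mulr_gt0 sigma_gt0 eta_gt0; lra.
split; first exact: Amat_explicit.
split; first exact: eigenvalue_AmatC.
by rewrite char_poly_AmatC //; apply: Ppoly_unit_disk_split.
Qed.
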